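(* Let $X\subseteq\mathbb{N}$ be finite, $\omega^{n+6}$-large and exp-sparse. Then $X$ admits an $(\omega^n,\omega)$-grouping: for every colouring $P:[X]^2\to2$ there is an $(\omega^n,\omega)$-grouping for $P$.
   Context: Ordinals below $\omega^\omega$ are in Cantor normal form; $\omega^j\cdot m$ = sum of $m$ copies of $\omega^j$. For $m\in\mathbb{N}$: $0[m]=0$, $(\beta+1)[m]=\beta$, $(\beta+\omega^{n})[m]=\beta+\omega^{n-1}\cdot m$ for $n\ge1$. A finite $X=\{x_0<\dots<x_{\ell-1}\}\subseteq\mathbb{N}$ is $\alpha$-large if $\alpha[x_0]\cdots[x_{\ell-1}]=0$. A set $X$ with $\min X\ge3$ is exp-sparse if $x<y$ in $X$ implies $4^x<y$. For $P:[X]^2\to2$, a finite sequence $\langle F_i\subseteq X:i<\ell\rangle$ of finite sets is an $(\alpha,\beta)$-grouping for $P$ if: (1) $\max F_i<\min F_j$ for $i<j<\ell$; (2) each $F_i$ is $\alpha$-large; (3) $\{\max F_i:i<\ell\}$ is $\beta$-large; (4) for all $i<j<\ell$, $x,x'\in F_i$, $y,y'\in F_j$: $P(x,y)=P(x',y')$. *)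

From mathcomp Require Import all_boot.
Set Implicit Arguments. Unset Strict Implicit. Unset Printing Implicit Defensive.

(* Ordinals below omega^omega in Cantor normal form
     alpha = omega^e_1 + ... + omega^e_k,  e_1 >= ... >= e_k,
   are represented by the list of exponents in REVERSED order
   [:: e_k; ...; e_1] (smallest term first).  The empty list is 0. *)
Definition cnf := seq nat.

Definition omega_pow (n : nat) : cnf := [:: n].

(* fundamental sequence alpha[m]:
   0[m] = 0, (beta+1)[m] = beta, (beta+omega^(n+1))[m] = beta + omega^n * m *)
Definition fund (a : cnf) (m : nat) : cnf :=
  match a with
  | [::] => [::]
  | 0 :: b => b
  | n.+1 :: b => nseq m n ++ b
  end.

(* A finite set X = {x_0 < ... < x_(l-1)} is represented by the strictly
   increasing list [:: x_0; ...; x_(l-1)].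
   X is alpha-large iff alpha[x_0]...[x_(l-1)] = 0. *)
Definition large (a : cnf) (X : seq nat) : bool :=
  foldl fund a X == [::].

Definition exp_sparse (X : seq nat) : Prop :=
  (forall x, x \in X -> 3 <= x) /\
  (forall x y, x \in X -> y \in X -> x < y -> 4 ^ x < y).

(* (alpha,beta)-grouping for P : [X]^2 -> 2 (P given as a function on pairs;
   only its values on pairs x < y of X are relevant). *)
Definition grouping (X : seq nat) (P : nat -> nat -> bool) (a b : cnf)
    (Fs : seq (seq nat)) : Prop :=
  (forall i, i < size Fs -> sorted ltn (nth [::] Fs i)
                            /\ {subset nth [::] Fs i <= X}) /\
  (forall i j, i < j < size Fs ->
     forall x y, x \in nth [::] Fs i -> y \in nth [::] Fs j -> x < y) /\
  (forall i, i < size Fs -> large a (nth [::] Fs i)) /\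
  large b (map (fun F => \max_(x <- F) x) Fs) /\
  (forall i j, i < j < size Fs ->
     forall x x' y y', x \in nth [::] Fs i -> x' \in nth [::] Fs i ->
       y \in nth [::] Fs j -> y' \in nth [::] Fs j -> P x y = P x' y').

From mathcomp Require Import all_boot.
From mathcomp Require Import zify.
Set Implicit Arguments. Unset Strict Implicit. Unset Printing Implicit Defensive.

(* Every w^k-large set contains a set with the tree shape of an exactly w^k-large
   set, and the argument works on such trees.  For any 2-colouring, the
   children of an exactly w^(k+1)-large set with root a can be thinned to a
   quarter of them whose leaves all have one colour (a pigeonhole argument on
   pairs of children, by induction on k).  Exp-sparseness makes 4^m negligible
   against a whenever m points precede a, so m colourings can be handled at
   once.  Inside X pick exactly w^n-large blocks S1 < S2, a point e, and an
   exactly w^(n+3)-large block D above them.  Thinning the children of D for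
   the colourings P x, x in S1 ++ S2, leaves e of them; two more thinning
   passes, one level each, make them pairwise homogeneous: first P x y comes to
   depend only on x and the block of y, then only on the two blocks.  A subset
   of S1 ++ S2 that is monochromatic for x |-> P x y0 is homogeneous with all
   of them and lies below e, so the maxima of the e + 1 blocks are w-large. *)

Lemma subseq_flatten (T : eqType) (Fs Gs : seq (seq T)) :
  subseq Fs Gs -> subseq (flatten Fs) (flatten Gs).
Proof.
elim: Gs Fs => [|G Gs IH] [|F Fs] //= sub; rewrite ?sub0seq //.
move: sub; case: eqP => [-> /IH|_ /IH /= sub]; first exact: cat_subseq.
exact: subseq_trans sub (suffix_subseq G _).
Qed.

Lemma mem_subseq_flatten (T : eqType) (F : seq T) Fs :
  F \in Fs -> subseq F (flatten Fs).
Proof.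
by move=> FFs; have := @subseq_flatten _ [:: F] Fs; rewrite /= cats0 sub1seq; apply.
Qed.

Lemma constant_inP (T : eqType) (s : seq T) :
  reflect {in s &, forall a b, a = b} (constant s).
Proof.
apply: (iffP idP) => [|eq_s].
  case: s => //= x s /allP cs a b.
  by rewrite !inE => /predU1P [->|/cs/eqP->] /predU1P [->|/cs/eqP->].
case: s eq_s => //= x s eq_s; apply/allP => y ys /=.
by rewrite (eq_s y x) ?inE ?ys ?orbT ?eqxx.
Qed.

Lemma constant_subseq (T : eqType) (s t : seq T) :
  subseq s t -> constant t -> constant s.
Proof.
move=> /mem_subseq st /constant_inP ct; apply/constant_inP => a b /st a_t /st b_t.
exact: ct.
Qed.

Lemma sorted_cat_lt (s t : seq nat) (x y : nat) :
  sorted ltn (s ++ t) -> x \in s -> y \in t -> x < y.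
Proof.
rewrite sorted_pairwise; last exact: ltn_trans.
by rewrite pairwise_cat => /and3P [/allrelP lt_st _ _]; apply: lt_st.
Qed.

Lemma sorted_flatten_lt (Fs : seq (seq nat)) i j (x y : nat) :
  sorted ltn (flatten Fs) -> i < j < size Fs ->
  x \in nth [::] Fs i -> y \in nth [::] Fs j -> x < y.
Proof.
move=> srt /andP [ij jFs] xi yj.
rewrite -(cat_take_drop j Fs) flatten_cat in srt; apply: sorted_cat_lt srt _ _.
  apply/flattenP; exists (nth [::] Fs i) => //.
  by rewrite -(nth_take _ ij) mem_nth // size_takel // ltnW.
apply/flattenP; exists (nth [::] Fs j) => //.
have -> : nth [::] Fs j = nth [::] (drop j Fs) 0 by rewrite nth_drop addn0.
by rewrite mem_nth // size_drop subn_gt0.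
Qed.

Lemma leq_div4_exp x a : 4 ^ x < a -> x <= a %/ 4.
Proof.
case: x => // x; rewrite leq_divRL // expnS => lt_a.
have := ltn_expl x (isT : 1 < 4); lia.
Qed.

Lemma leq_sq_exp4 e : e * e <= 4 ^ e.
Proof.
rewrite (_ : 4 = 2 * 2) // expnMn.
by have le_e := ltnW (ltn_expl e (isT : 1 < 2)); apply: leq_mul.
Qed.

Lemma fund_cat (a b : cnf) m : a != [::] -> fund (a ++ b) m = fund a m ++ b.
Proof. by case: a => [|[|e] a] //= _; rewrite catA. Qed.

Lemma large_cat (a b : cnf) Y : a != [::] -> large (a ++ b) Y ->
  exists Y1 Y2, [/\ Y = Y1 ++ Y2, large a Y1 & large b Y2].
Proof.
rewrite /large; elim: Y a => [|y Y IHY] a a0 /=; first by case: a a0.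
rewrite fund_cat //; have [fa0|fa0] := eqVneq (fund a y) [::].
  by rewrite fa0 => lb; exists [:: y], Y; rewrite /= fa0.
by move=> /(IHY _ fa0) [Y1 [Y2 [-> l1 l2]]]; exists (y :: Y1), Y2.
Qed.

Lemma foldl_fund_nseq0 m s : foldl fund (nseq m 0) s = nseq (m - size s) 0.
Proof.
elim: s m => [|y s IHs] [|m] //=.
by rewrite -[[::]]/(nseq 0 0) IHs.
Qed.

Lemma large_omega_cons x s : large (omega_pow 1) (x :: s) = (x <= size s).
Proof. by rewrite /large /= cats0 foldl_fund_nseq0 -size_eq0 size_nseq subn_eq0. Qed.

(* S = a :: Q_1 ++ ... ++ Q_a with every Q_i exactly w^k-large, following
   w^(k+1)[a] = w^k * a; by exactly_large_foldl, the fundamental sequence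
   reaches 0 exactly at the last element of S. *)
Fixpoint exactly_large (k : nat) (S : seq nat) : Prop :=
  match k with
  | 0 => exists a, S = [:: a]
  | k.+1 => exists a Qs, [/\ S = a :: flatten Qs, size Qs = a &
                            {in Qs, forall Q, exactly_large k Q}]
  end.

Lemma exactly_large_head k S : exactly_large k S -> head 0 S \in S.
Proof. by case: k => [[a ->]|k [a [Qs [-> _ _]]]]; rewrite mem_head. Qed.

Lemma exactly_large_foldl k S b : exactly_large k S -> foldl fund (k :: b) S = b.
Proof.
elim: k S b => [|k IHk] S b; first by case=> a ->.
case=> a [Qs [-> <- exQs]] /=; elim: Qs exQs => //= Q Qs IHQs exQs.
rewrite foldl_cat IHk ?IHQs //; last exact: exQs (mem_head _ _).
by move=> R RQs; apply: exQs; rewrite inE RQs orbT.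
Qed.

Lemma large_of_exactly_large k S : exactly_large k S -> large (omega_pow k) S.
Proof. by move/exactly_large_foldl; rewrite /large => ->. Qed.

Lemma large_exactly_large k Y : large (omega_pow k) Y ->
  exists2 S, subseq S Y & exactly_large k S.
Proof.
elim: k Y => [|k IHk] [|y Y] //.
  by exists [:: y]; [rewrite sub1seq mem_head | exists y].
rewrite /large /= cats0 => lY.
suff [Qs [sizeQs exQs subQs]] : exists Qs, [/\ size Qs = y,
    {in Qs, forall Q, exactly_large k Q} & subseq (flatten Qs) Y].
  by exists (y :: flatten Qs); [rewrite /= eqxx | exists y, Qs].
elim: y Y lY => [|m IHm] Y lY; first by exists [::]; rewrite sub0seq.
have [Y1 [Y2 [-> l1 l2]]] := @large_cat [:: k] (nseq m k) Y isT lY.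
have [S subS exS] := IHk _ l1; have [Qs [sizeQs exQs subQs]] := IHm _ l2.
exists (S :: Qs); split; [by rewrite /= sizeQs | | exact: cat_subseq].
by move=> Q; rewrite inE => /predU1P [->|/exQs].
Qed.

Lemma exactly_large_child k (S : seq nat) :
  {in S, forall x, 0 < x} -> exactly_large k.+1 S ->
  exists2 Q, subseq (head 0 S :: Q) S & exactly_large k Q.
Proof.
move=> pos [a [[|Q Qs] [eS sizeQs exQs]]]; rewrite {}eS in pos *.
  by have := pos a (mem_head _ _); rewrite -sizeQs.
by exists Q; [rewrite /= eqxx prefix_subseq | apply: exQs; rewrite mem_head].
Qed.

Lemma exactly_large_shrink k j (S : seq nat) : {in S, forall x, 0 < x} ->
  exactly_large (j + k) S -> exists2 S', subseq S' S & exactly_large k S'.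
Proof.
elim: j S => [|j IHj] S pos exS; first by exists S.
have [Q /cons_subseq subQ exQ] := exactly_large_child pos exS.
have [S' subS' exS'] := IHj Q (fun x xQ => pos x (mem_subseq subQ xQ)) exQ.
by exists S'; first exact: subseq_trans subQ.
Qed.

Definition sparse (S : seq nat) : Prop := sorted ltn S /\ exp_sparse S.

Lemma sparse_subseq S T : subseq S T -> sparse T -> sparse S.
Proof.
move=> ST [srtT [ge3 expT]]; have memS := mem_subseq ST.
split; first exact: (subseq_sorted ltn_trans ST srtT).
by split=> [x /memS /ge3 | x y /memS xT /memS yT]; last exact: expT.
Qed.

Lemma sparse_ge3 S x : sparse S -> x \in S -> 3 <= x.
Proof. by case=> _ [ge3 _]; apply: ge3. Qed.

Lemma sparse_gt0 S : sparse S -> {in S, forall x, 0 < x}.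
Proof. by move=> spS x /(sparse_ge3 spS); apply: leq_trans. Qed.

Lemma sparse_cat_exp s t (x y : nat) :
  sparse (s ++ t) -> x \in s -> y \in t -> 4 ^ x < y.
Proof.
move=> [srt [_ expst]] xs yt; apply: expst; last exact: sorted_cat_lt srt xs yt.
  by rewrite mem_cat xs.
by rewrite mem_cat yt orbT.
Qed.

(* The elements of s are distinct and lie in [1, max s], so size s <= max s. *)
Lemma sparse_exp_size s t (y : nat) : sparse (s ++ t) -> y \in t -> 4 ^ size s <= y.
Proof.
case/lastP: s => [|s x] sp yt; first by rewrite expn0; apply: leq_trans (sparse_ge3 sp yt).
have [srt _] := sparse_subseq (prefix_subseq _ t) sp.
have xs : x \in rcons s x by rewrite mem_rcons mem_head.
apply/ltnW/(leq_ltn_trans _ (sparse_cat_exp sp xs yt)).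
rewrite leq_pexp2l // -[X in _ <= X](size_iota 1 x).
apply: uniq_leq_size => [|z zs]; first exact: (sorted_uniq ltn_trans ltnn srt).
rewrite mem_iota add1n ltnS (sparse_gt0 sp) ?mem_cat ?zs //=.
move: zs; rewrite mem_rcons inE => /predU1P [-> //|zs].
by rewrite -cats1 in srt; apply/ltnW/(sorted_cat_lt srt zs); rewrite mem_head.
Qed.

Definition monochromatic (f : nat -> bool) (c : bool) (S : seq nat) : bool :=
  all (fun x => f x == c) S.

Lemma monochromatic_subseq f c S T :
  subseq S T -> monochromatic f c T -> monochromatic f c S.
Proof. by move=> /mem_subseq ST /allP monoT; apply/allP => x /ST /monoT. Qed.

Lemma monochromatic_flatten f c Rs :
  monochromatic f c (flatten Rs) = all (monochromatic f c) Rs.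
Proof. by elim: Rs => //= R Rs IHRs; rewrite /monochromatic all_cat -IHRs. Qed.

Lemma monochromatic_constant f c S : monochromatic f c S -> constant (map f S).
Proof. by move=> monoS; apply: (@all_pred1_constant _ c); rewrite all_map. Qed.

Lemma majority_colour f (Rs : seq (seq nat)) :
  {in Rs, forall R, exists c, monochromatic f c R} ->
  exists c, size Rs <= (count (monochromatic f c) Rs).*2.
Proof.
move=> monoRs.
have cover : count (predU (monochromatic f true) (monochromatic f false)) Rs = size Rs.
  apply/eqP; rewrite -all_count; apply/allP => R /monoRs [[] monoR] /=.
    by rewrite monoR.
  by rewrite monoR orbT.
have := count_predUI (monochromatic f true) (monochromatic f false) Rs.
rewrite cover => count_sum.
have [le_tf|lt_ft] := leqP (count (monochromatic f true) Rs) (count (monochromatic f false) Rs).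
  by exists false; lia.
by exists true; lia.
Qed.

Section Subfamilies.

Variable k : nat.

(* The pigeonhole principle at level k; exactly_large_pigeonhole derives it at
   level k.+1 from the lemmas of this section. *)
Hypothesis pigeonhole_k : forall (f : nat -> bool) S1 S2,
  exactly_large k S1 -> exactly_large k S2 -> sparse (S1 ++ S2) ->
  exists c S, [/\ exactly_large k S, subseq S (S1 ++ S2) & monochromatic f c S].

Lemma monochromatic_pairs f (Qs : seq (seq nat)) :
  {in Qs, forall Q, exactly_large k Q} -> sparse (flatten Qs) ->
  exists Rs : seq (seq nat), [/\ {in Rs, forall R, exactly_large k R},
    {in Rs, forall R, exists c, monochromatic f c R},
    subseq (flatten Rs) (flatten Qs) & size Qs <= (size Rs).*2.+1].
Proof.
have [m] := ubnP (size Qs); elim: m Qs => // m IHm Qs.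
case: Qs => [|Q1 [|Q2 Qs]] ltQm exQs spQs; try by exists [::]; split; rewrite ?sub0seq.
have exQ Q : Q \in Qs -> exactly_large k Q.
  by move=> QQs; apply: exQs; rewrite !inE QQs !orbT.
rewrite /= catA in spQs.
have ex2 : exactly_large k Q2 by apply: exQs; rewrite !inE eqxx orbT.
have [c [S [exS subS monoS]]] :=
  pigeonhole_k f (exQs _ (mem_head _ _)) ex2 (sparse_subseq (prefix_subseq _ _) spQs).
have [Rs [exRs monoRs subRs sizeRs]] :=
  IHm Qs (leq_trans (leqnSn _) ltQm) exQ (sparse_subseq (suffix_subseq _ _) spQs).
exists (S :: Rs); split => /=; [| |by rewrite catA cat_subseq | by rewrite doubleS !ltnS].
  by move=> R; rewrite inE => /predU1P [->|/exRs].
by move=> R; rewrite inE => /predU1P [->|/monoRs]; first by exists c.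
Qed.

Lemma monochromatic_subfamily f (Qs : seq (seq nat)) :
  {in Qs, forall Q, exactly_large k Q} -> sparse (flatten Qs) ->
  exists c (Rs : seq (seq nat)), [/\ {in Rs, forall R, exactly_large k R},
    subseq (flatten Rs) (flatten Qs), monochromatic f c (flatten Rs)
    & size Qs %/ 4 <= size Rs].
Proof.
move=> exQs spQs.
have [Rs [exRs monoRs subRs sizeRs]] := monochromatic_pairs f exQs spQs.
have [c sizec] := majority_colour monoRs.
exists c, (filter (monochromatic f c) Rs); split.
- by move=> R; rewrite mem_filter => /andP [_ /exRs].
- exact: subseq_trans (subseq_flatten (filter_subseq _ _)) subRs.
- by rewrite monochromatic_flatten filter_all.
- by move: sizeRs sizec; rewrite size_filter -!addnn; lia.
Qed.

End Subfamilies.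

Lemma exactly_large_pigeonhole k (f : nat -> bool) S1 S2 :
  exactly_large k S1 -> exactly_large k S2 -> sparse (S1 ++ S2) ->
  exists c S, [/\ exactly_large k S, subseq S (S1 ++ S2) & monochromatic f c S].
Proof.
elim: k f S1 S2 => [|k IHk] f S1 S2.
  move=> [a ->] _ _; exists (f a), [:: a].
  by split; [exists a | exact: prefix_subseq | rewrite /monochromatic /= eqxx].
move=> exS1 [a [Qs [eS2 sizeQs exQs]]]; rewrite {}eS2 => sp.
have spQs : sparse (flatten Qs) :=
  sparse_subseq (subseq_trans (subseq_cons _ a) (suffix_subseq S1 _)) sp.
have [c [Rs [exRs subRs monoRs sizeRs]]] := monochromatic_subfamily IHk f exQs spQs.
(* If some x in S1 has colour c, then 4 ^ x < a leaves room for x of the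
   monochromatic children after it; otherwise S1 itself is monochromatic. *)
case: (boolP (has (fun x => f x == c) S1)) => [/hasP [x xS1 fx] | /hasPn monoS1].
  have xRs : x <= size Rs.
    apply: leq_trans (leq_div4_exp _) sizeRs.
    by rewrite sizeQs (sparse_cat_exp sp xS1 (mem_head _ _)).
  have subTake : subseq (flatten (take x Rs)) (flatten Rs).
    exact: subseq_flatten (take_subseq _ _).
  exists c, (x :: flatten (take x Rs)); split.
  - exists x, (take x Rs); split => //; first by rewrite size_takel.
    by move=> R /mem_take /exRs.
  - rewrite -cat1s; apply: cat_subseq; first by rewrite sub1seq.
    exact: subseq_trans subTake (subseq_trans subRs (subseq_cons _ _)).
  - by rewrite /monochromatic /= fx; apply: monochromatic_subseq monoRs.
exists (~~ c), S1; split => //; first exact: prefix_subseq.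
by apply/allP => x /monoS1; case: (f x); case: (c).
Qed.

Definition end_homogeneous (P : nat -> nat -> bool) (W V : seq nat) : bool :=
  all (fun x => constant [seq P x y | y <- V]) W.

Definition homogeneous (P : nat -> nat -> bool) (F G : seq nat) : bool :=
  constant [seq P x y | x <- F, y <- G].

Lemma end_homogeneous_subseq P W V V' :
  subseq V' V -> end_homogeneous P W V -> end_homogeneous P W V'.
Proof.
by move=> subV /allP ehV; apply/allP => x /ehV; apply: constant_subseq; apply: map_subseq.
Qed.

Lemma homogeneous_of_end_homogeneous P W V F G y0 :
  subseq F W -> subseq G V -> y0 \in V ->
  end_homogeneous P W V -> constant [seq P x y0 | x <- F] -> homogeneous P F G.
Proof.
move=> /mem_subseq subF /mem_subseq subG y0V /allP ehWV /constant_inP cF.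
have eq_y0 x y : x \in F -> y \in G -> P x y = P x y0.
  move=> xF yG; have /constant_inP := ehWV x (subF x xF).
  by apply; apply: map_f => //; exact: subG.
apply/constant_inP => _ _ /allpairsP [[x y] /= [xF yG ->]] /allpairsP [[x' y'] /= [x'F y'G ->]].
by rewrite !eq_y0 //; apply: cF; apply: map_f.
Qed.

Lemma end_homogeneous_subfamily k (g : nat -> nat -> bool) xs (Qs : seq (seq nat)) :
  {in Qs, forall Q, exactly_large k Q} -> sparse (flatten Qs) ->
  exists Rs : seq (seq nat), [/\ {in Rs, forall R, exactly_large k R},
    subseq (flatten Rs) (flatten Qs), end_homogeneous g xs (flatten Rs)
    & size Qs %/ 4 ^ size xs <= size Rs].
Proof.
elim: xs Qs => [|x xs IHxs] Qs exQs spQs; first by exists Qs; rewrite expn0 divn1.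
have [c [Rs1 [exRs1 subRs1 monoRs1 sizeRs1]]] :=
  monochromatic_subfamily (@exactly_large_pigeonhole k) (g x) exQs spQs.
have [Rs2 [exRs2 subRs2 ehRs2 sizeRs2]] := IHxs Rs1 exRs1 (sparse_subseq subRs1 spQs).
exists Rs2; split => //; first exact: subseq_trans subRs2 subRs1.
  apply/andP; split => //.
  exact: monochromatic_constant (monochromatic_subseq subRs2 monoRs1).
by apply: leq_trans sizeRs2; rewrite expnS divnMA leq_div2r.
Qed.

Lemma end_homogeneous_subblock k g xs Y :
  exactly_large k.+1 Y -> sparse Y -> 4 ^ size xs <= head 0 Y ->
  exists W, [/\ exactly_large k W, subseq W Y & end_homogeneous g xs W].
Proof.
move=> [y [Qs [-> sizeQs exQs]]] spY /= bound.
have spQs : sparse (flatten Qs) := sparse_subseq (subseq_cons _ y) spY.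
have [[|W Rs] [exRs subRs ehRs sizeRs]] := end_homogeneous_subfamily g xs exQs spQs.
  by move: sizeRs; rewrite leqNgt divn_gt0 ?expn_gt0 // sizeQs bound.
exists W; split; first exact: exRs (mem_head _ _).
  exact: subseq_trans (prefix_subseq W _) (subseq_trans subRs (subseq_cons _ y)).
exact: end_homogeneous_subseq (prefix_subseq W _) ehRs.
Qed.

Lemma end_homogeneous_blocks k P pre (Ys : seq (seq nat)) :
  {in Ys, forall Y, exactly_large k.+1 Y} -> sparse (pre ++ flatten Ys) ->
  exists Ws : seq (seq nat), [/\ size Ws = size Ys, {in Ws, forall W, exactly_large k W},
    subseq (flatten Ws) (flatten Ys), all (end_homogeneous P pre) Ws
    & pairwise (end_homogeneous P) Ws].
Proof.
elim: Ys pre => [|Y Ys IHYs] pre exYs sp; first by exists [::].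
have exY := exYs Y (mem_head _ _).
have exYs' : {in Ys, forall Y', exactly_large k.+1 Y'}.
  by move=> Y' Y'Ys; apply: exYs; rewrite inE Y'Ys orbT.
have spY : sparse Y := sparse_subseq (subseq_trans (prefix_subseq Y _) (suffix_subseq pre _)) sp.
have [W [exW subW ehW]] := end_homogeneous_subblock P exY spY
  (sparse_exp_size sp (mem_subseq (prefix_subseq Y _) (exactly_large_head exY))).
have sp' : sparse ((pre ++ W) ++ flatten Ys).
  by apply: sparse_subseq sp; rewrite -catA cat_subseq // cat_subseq.
have [Ws [sizeWs exWs subWs ehpre ehWs]] := IHYs _ exYs' sp'.
exists (W :: Ws); split => /=; [by rewrite sizeWs | | exact: cat_subseq | |].
- by move=> W'; rewrite inE => /predU1P [->|/exWs].
- by rewrite ehW; apply: sub_all ehpre => V; rewrite /end_homogeneous all_cat => /andP [].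
- by rewrite ehWs andbT; apply: sub_all ehpre => V; rewrite /end_homogeneous all_cat => /andP [].
Qed.

Lemma homogeneous_blocks k P (Ws : seq (seq nat)) :
  {in Ws, forall W, exactly_large k.+1 W} -> sparse (flatten Ws) ->
  {in flatten Ws, forall y, 4 ^ size Ws <= y} -> pairwise (end_homogeneous P) Ws ->
  exists Fs : seq (seq nat), [/\ size Fs = size Ws, {in Fs, forall F, exactly_large k F},
    {in Fs, forall F, exists2 W, W \in Ws & subseq F W},
    subseq (flatten Fs) (flatten Ws) & pairwise (homogeneous P) Fs].
Proof.
elim: Ws => [|W Ws IHWs] exWs sp bound; first by exists [::].
rewrite pairwise_cons => /andP [/allP ehW ehWs].
have exW := exWs W (mem_head _ _).
have exWs' : {in Ws, forall W', exactly_large k.+1 W'}.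
  by move=> W' W'Ws; apply: exWs; rewrite inE W'Ws orbT.
have bound' : {in flatten Ws, forall y, 4 ^ size Ws <= y}.
  move=> y yWs; apply: leq_trans (bound y _); first by rewrite leq_pexp2l.
  by rewrite mem_cat yWs orbT.
have [Fs [sizeFs exFs subFs subFsWs homFs]] :=
  IHWs exWs' (sparse_subseq (suffix_subseq _ _) sp) bound' ehWs.
have headW : 4 ^ size (map (head 0) Ws) <= head 0 W.
  rewrite size_map; apply: leq_trans (bound _ _); first by rewrite leq_pexp2l.
  by rewrite mem_cat (exactly_large_head exW).
have [F [exF subF ehF]] := end_homogeneous_subblock (fun y x => P x y) exW
  (sparse_subseq (prefix_subseq _ _) sp) headW.
exists (F :: Fs); split => /=; [by rewrite sizeFs | | | exact: cat_subseq |].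
- by move=> F'; rewrite inE => /predU1P [->|/exFs].
- move=> F'; rewrite inE => /predU1P [->|/subFs [V VWs subV]]; first by exists W; rewrite ?mem_head.
  by exists V; rewrite // inE VWs orbT.
rewrite homFs andbT; apply/allP => G /subFs [V VWs subG].
apply: (homogeneous_of_end_homogeneous subF subG (exactly_large_head (exWs' V VWs)) (ehW V VWs)).
by move/allP: ehF; apply; apply: map_f.
Qed.

Lemma homogeneous_family k P (Ys : seq (seq nat)) :
  {in Ys, forall Y, exactly_large k.+2 Y} -> sparse (flatten Ys) ->
  {in flatten Ys, forall y, 4 ^ size Ys <= y} ->
  exists Fs : seq (seq nat), [/\ size Fs = size Ys, {in Fs, forall F, exactly_large k F},
    subseq (flatten Fs) (flatten Ys) & pairwise (homogeneous P) Fs].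
Proof.
move=> exYs spYs bound.
have [Ws [sizeWs exWs subWs _ ehWs]] := end_homogeneous_blocks P (pre := [::]) exYs spYs.
have boundW : {in flatten Ws, forall y, 4 ^ size Ws <= y}.
  by rewrite sizeWs => y /(mem_subseq subWs); apply: bound.
have [Fs [sizeFs exFs _ subFs homFs]] :=
  homogeneous_blocks exWs (sparse_subseq subWs spYs) boundW ehWs.
by exists Fs; split; [rewrite sizeFs | | exact: subseq_trans subFs subWs |].
Qed.

Lemma homogeneous_grouping_family n P S1 S2 e D :
  exactly_large n S1 -> exactly_large n S2 -> exactly_large n.+3 D ->
  sparse (S1 ++ S2 ++ e :: D) ->
  exists F0 (Fs : seq (seq nat)), [/\ {in F0 :: Fs, forall F, exactly_large n F},
    subseq (flatten (F0 :: Fs)) (S1 ++ S2 ++ e :: D),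
    pairwise (homogeneous P) (F0 :: Fs) & {in F0, forall x, x <= size Fs}].
Proof.
move=> exS1 exS2 [d [Qs [-> sizeQs exQs]]]; rewrite catA; set Z := S1 ++ S2 => sp.
have spZ : sparse Z := sparse_subseq (prefix_subseq _ _) sp.
have spe : sparse ([:: e] ++ d :: flatten Qs) := sparse_subseq (suffix_subseq Z _) sp.
have spQs : sparse (flatten Qs) :=
  sparse_subseq (subseq_trans (subseq_cons _ d) (subseq_cons _ e)) spe.
have Z_e : 4 ^ size Z <= e := sparse_exp_size sp (mem_head _ _).
have e_Qs y : y \in flatten Qs -> 4 ^ e < y.
  by move=> yQs; apply: (sparse_cat_exp spe (mem_head _ _)); rewrite inE yQs orbT.
have e_d : 4 ^ e < d by apply: (sparse_cat_exp spe (mem_head _ _)); rewrite mem_head.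
have [Rs [exRs subRs ehRs sizeRs]] := end_homogeneous_subfamily (k := n.+2) P Z exQs spQs.
have e_Rs : e <= size Rs.
  apply: leq_trans sizeRs; rewrite sizeQs leq_divRL ?expn_gt0 //.
  exact: leq_trans (leq_mul (leqnn e) Z_e) (leq_trans (leq_sq_exp4 e) (ltnW e_d)).
have subYs : subseq (flatten (take e Rs)) (flatten Qs).
  exact: subseq_trans (subseq_flatten (take_subseq _ _)) subRs.
have boundYs : {in flatten (take e Rs), forall y, 4 ^ size (take e Rs) <= y}.
  by rewrite size_takel // => y /(mem_subseq subYs) /e_Qs /ltnW.
have [Fs [sizeFs exFs subFs homFs]] := homogeneous_family P
  (fun Y YRs => exRs Y (mem_take YRs)) (sparse_subseq subYs spQs) boundYs.
have subFsRs : subseq (flatten Fs) (flatten Rs).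
  exact: subseq_trans subFs (subseq_flatten (take_subseq _ _)).
have [c [F0 [exF0 subF0 monoF0]]] :=
  exactly_large_pigeonhole (fun x => P x (head 0 (flatten Rs))) exS1 exS2 spZ.
exists F0, Fs; split.
- by move=> F; rewrite inE => /predU1P [->|/exFs].
- apply: cat_subseq subF0 (subseq_trans subFsRs (subseq_trans subRs _)).
  exact: subseq_trans (subseq_cons _ d) (subseq_cons _ e).
- rewrite pairwise_cons homFs andbT; apply/allP => G GFs.
  have subG := subseq_trans (mem_subseq_flatten GFs) subFsRs.
  have headRs : head 0 (flatten Rs) \in flatten Rs.
    move: (mem_subseq subG (exactly_large_head (exFs G GFs))).
    by case: (flatten Rs) => // r rs _; rewrite mem_head.
  exact: homogeneous_of_end_homogeneous subF0 subG headRs ehRs (monochromatic_constant monoF0).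
- move=> x /(mem_subseq subF0) xZ; rewrite sizeFs size_takel //.
  exact: leq_trans (ltnW (ltn_expl x (isT : 1 < 4))) (ltnW (sparse_cat_exp sp xZ (mem_head _ _))).
Qed.

Lemma exactly_large_blocks n T : sparse T -> exactly_large (n + 6) T ->
  exists (S1 S2 : seq nat) e D, [/\ subseq (S1 ++ S2 ++ e :: D) T,
    exactly_large n S1, exactly_large n S2 & exactly_large n.+3 D].
Proof.
rewrite addnC => spT [t [Bs [eT sizeBs exBs]]].
have : 3 <= size Bs by rewrite sizeBs; apply: (sparse_ge3 spT); rewrite eT mem_head.
case: Bs {sizeBs} eT exBs => [|B1 [|B2 [|B3 Bs]]] // eT exBs _.
have subB : subseq (B1 ++ B2 ++ B3) T.
  rewrite eT; apply: subseq_trans (subseq_cons _ t).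
  by rewrite /= !catA prefix_subseq.
have pos B : subseq B (B1 ++ B2 ++ B3) -> {in B, forall x, 0 < x}.
  by move=> subB' x /(mem_subseq (subseq_trans subB' subB)) /(sparse_gt0 spT).
have B2in : B2 \in [:: B1, B2, B3 & Bs] by rewrite !inE eqxx orbT.
have B3in : B3 \in [:: B1, B2, B3 & Bs] by rewrite !inE eqxx !orbT.
have [S1 subS1 exS1] := exactly_large_shrink (j := 5) (k := n) (pos _ (prefix_subseq _ _))
  (exBs B1 (mem_head _ _)).
have subB2 : subseq B2 (B1 ++ B2 ++ B3) := subseq_trans (prefix_subseq B2 B3) (suffix_subseq B1 _).
have [S2 subS2 exS2] := exactly_large_shrink (j := 5) (k := n) (pos _ subB2)
  (exBs B2 B2in).
have subB3 : subseq B3 (B1 ++ B2 ++ B3) := subseq_trans (suffix_subseq B2 B3) (suffix_subseq B1 _).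
have [C subC exC] := exactly_large_child (k := n.+4) (pos _ subB3) (exBs B3 B3in).
have [D subD exD] := exactly_large_shrink (j := 1) (k := n.+3)
  (pos _ (subseq_trans (cons_subseq subC) subB3)) exC.
exists S1, S2, (head 0 B3), D; split => //.
apply: subseq_trans subB; do 2 apply: cat_subseq => //.
exact: subseq_trans (cat_subseq (subseq_refl [:: head 0 B3]) subD) subC.
Qed.

Lemma grouping_of_homogeneous X P n F0 (Fs : seq (seq nat)) : sorted ltn X ->
  {in F0 :: Fs, forall F, exactly_large n F} -> subseq (flatten (F0 :: Fs)) X ->
  pairwise (homogeneous P) (F0 :: Fs) -> {in F0, forall x, x <= size Fs} ->
  grouping X P (omega_pow n) (omega_pow 1) (F0 :: Fs).
Proof.
move=> srtX exFs subX homFs maxF0.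
have srtFs : sorted ltn (flatten (F0 :: Fs)) := subseq_sorted ltn_trans subX srtX.
have subFX F : F \in F0 :: Fs -> subseq F X.
  by move=> FFs; apply: subseq_trans (mem_subseq_flatten FFs) subX.
split; [|split; [|split; [|split]]].
- move=> i /(mem_nth [::]) /subFX subF; split; last exact: mem_subseq subF.
  exact: (subseq_sorted ltn_trans subF srtX).
- by move=> i j ijFs x y; apply: sorted_flatten_lt srtFs ijFs.
- by move=> i /(mem_nth [::]) /exFs /large_of_exactly_large.
- by rewrite /= large_omega_cons size_map; apply/bigmax_leqP_seq => x xF0 _; apply: maxF0.
- move=> i j /andP [ij jFs] x x' y y' xi x'i yj y'j.
  move/(pairwiseP [::]): homFs => homFs.
  have /constant_inP hom := homFs i j (ltn_trans ij jFs) jFs ij.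
  by apply: hom; apply/allpairsP; [exists (x, y) | exists (x', y')].
Qed.

Theorem lemma2p7 (n : nat) (X : seq nat) :
  sorted ltn X -> large (omega_pow (n + 6)) X -> exp_sparse X ->
  forall P : nat -> nat -> bool,
    exists Fs : seq (seq nat), grouping X P (omega_pow n) (omega_pow 1) Fs.
Proof.
move=> srtX largeX expX P; have spX : sparse X by [].
have [T subTX exT] := large_exactly_large largeX.
have [S1 [S2 [e [D [subT exS1 exS2 exD]]]]] := exactly_large_blocks (sparse_subseq subTX spX) exT.
have subX := subseq_trans subT subTX.
have [F0 [Fs [exFs subFs homFs maxF0]]] :=
  homogeneous_grouping_family P exS1 exS2 exD (sparse_subseq subX spX).
exists (F0 :: Fs).
exact: grouping_of_homogeneous srtX exFs (subseq_trans subFs subX) homFs maxF0.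
Qed.
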